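(* Fix a $C^0$-concept over $\mathbb{K}$. Let $E,F\in\mathcal{M}$, $U\subseteq E$ open, $f\colon U\to F$ of class $C^1$ and $x\in U$. Then $df(x)\colon E\to F$ is a $\mathbb{K}$-linear $C^0$-map.
   Context: Let $\mathbb{K}$ be a commutative ring with unit carrying a topology. A $C^0$-concept over $\mathbb{K}$ consists of: (a) a class $\mathcal{M}$ of topologized $\mathbb{K}$-modules with $\mathbb{K}\in\mathcal{M}$; (b) for $E,F\in\mathcal{M}$ and open $U\subseteq E$, a set $C^0(U,F)$ of continuous maps; (c) for $E_1,E_2\in\mathcal{M}$ a topology on $E_1\times E_2$ (not necessarily the product topology) making it a member of $\mathcal{M}$; subject to: (I.1) composites of $C^0$-maps are $C^0$, identities and inclusions of open subsets are $C^0$; (I.2) $x\mapsto rx+b$ is $C^0$; (I.3) $t\mapsto tv+x$ is $C^0$; (I.4) $\mathbb{K}^\times$ is open and inversion is $C^0$; (I.5) $C^0$ is local on open covers; (II.1) projections and $v\mapsto(v,y)$, $w\mapsto(x,w)$ are $C^0$; (II.2) $f_1\times f_2$ is $C^0$ for $C^0$-maps $f_i$; (II.3) diagonals are $C^0$; (II.4) exchange/associativity maps of products are $C^0$ both ways; (II.5) addition and scalar multiplication are $C^0$; (III) a $C^0$-map on open $U\subseteq\mathbb{K}$ is determined by its values on $U\cap\mathbb{K}^\times$. For open $U\subseteq E$, $U^{[1]}=\{(x,v,t)\in U\times E\times\mathbb{K}:x+tv\in U\}$; a $C^0$-map $f$ is $C^1$ if there is a $C^0$-map $f^{[1]}\colon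 U^{[1]}\to F$ with $f(x+tv)-f(x)=t\,f^{[1]}(x,v,t)$ for all $(x,v,t)\in U^{[1]}$ (unique), and $df(x)v:=f^{[1]}(x,v,0)$. *)

From HB Require Import structures.
From mathcomp Require Import all_boot all_order all_algebra.
Set Implicit Arguments. Unset Strict Implicit. Unset Printing Implicit Defensive.
Import GRing.Theory.
Local Open Scope ring_scope.

Definition is_topology (T : Type) (O : (T -> Prop) -> Prop) : Prop :=
  O (fun _ => True) /\ O (fun _ => False) /\
  (forall (I : Type) (A : I -> T -> Prop), (forall i, O (A i)) ->
     O (fun x => exists i, A i x)) /\
  (forall A B, O A -> O B -> O (fun x => A x /\ B x)).

Section TopMod.
Variable K : comUnitRingType.

(* A topologized K-module: a K-module with a family of open sets
   (the topology axioms are imposed on members of the class M). *)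
Record topmod := TopMod { tm_sort :> lmodType K; tm_open : (tm_sort -> Prop) -> Prop }.

Definition Ktop (TK : (K -> Prop) -> Prop) : topmod := @TopMod K^o TK.

(* E1 x E2 carrying a given (not necessarily product) topology. *)
Definition prodtop (E1 E2 : topmod) (O : ((E1 * E2)%type -> Prop) -> Prop) : topmod :=
  @TopMod (E1 * E2)%type O.

Definition cont_on (E F : topmod) (U : E -> Prop) (f : E -> F) : Prop :=
  forall V, tm_open V -> exists W, tm_open W /\
    (forall x, U x -> (W x <-> V (f x))).
End TopMod.

(* A C^0-concept over (K, TK).  Maps U -> F are encoded as total functions
   E -> F of which only the values on U matter (axiom c0_ext). *)
Record C0concept (K : comUnitRingType) (TK : (K -> Prop) -> Prop) := {
  inM : topmod K -> Prop;
  C0 : forall E F : topmod K, (E -> Prop) -> (E -> F) -> Prop;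
  ptop : forall E1 E2 : topmod K, ((E1 * E2)%type -> Prop) -> Prop;
  M_top : forall E, inM E -> is_topology (@tm_open K E);
  M_K : inM (Ktop TK);
  M_prod : forall E1 E2, inM E1 -> inM E2 -> inM (prodtop (@ptop E1 E2));
  C0_cont : forall E F U f, inM E -> inM F -> tm_open U -> @C0 E F U f -> cont_on U f;
  C0_ext : forall (E F : topmod K) (U : E -> Prop) (f g : E -> F), (forall x, U x -> f x = g x) ->
     C0 U f -> C0 U g;
  C0_comp : forall (E F G : topmod K) U V (f : E -> F) (g : F -> G),
     inM E -> inM F -> inM G -> tm_open U -> tm_open V ->
     (forall x, U x -> V (f x)) -> C0 U f -> C0 V g -> C0 U (fun x => g (f x));
  C0_id_incl : forall (E : topmod K) (V : E -> Prop), inM E -> tm_open V ->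
     @C0 E E V (fun x => x);
  C0_affine : forall (E : topmod K) (r : K) (b : E), inM E ->
     @C0 E E (fun _ => True) (fun x => r *: x + b);
  C0_line : forall (E : topmod K) (v x : E), inM E ->
     @C0 (Ktop TK) E (fun _ => True) (fun t : K^o => (t : K) *: v + x);
  units_open : TK (fun t : K => t \is a GRing.unit);
  C0_inv : @C0 (Ktop TK) (Ktop TK) (fun t : K^o => (t : K) \is a GRing.unit)
     (fun t : K^o => ((t : K)^-1 : K^o));
  C0_local : forall (E F : topmod K) (U : E -> Prop) (f : E -> F)
     (I : Type) (Ui : I -> E -> Prop), inM E -> inM F ->
     (forall i, tm_open (Ui i)) -> (forall x, U x <-> exists i, Ui i x) ->
     (forall i, C0 (Ui i) f) -> C0 U f;
  C0_fst : forall E1 E2, inM E1 -> inM E2 ->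
     @C0 (prodtop (@ptop E1 E2)) E1 (fun _ => True) fst;
  C0_snd : forall E1 E2, inM E1 -> inM E2 ->
     @C0 (prodtop (@ptop E1 E2)) E2 (fun _ => True) snd;
  C0_pairl : forall (E1 E2 : topmod K) (y : E2), inM E1 -> inM E2 ->
     @C0 E1 (prodtop (@ptop E1 E2)) (fun _ => True) (fun v => (v, y));
  C0_pairr : forall (E1 E2 : topmod K) (x : E1), inM E1 -> inM E2 ->
     @C0 E2 (prodtop (@ptop E1 E2)) (fun _ => True) (fun w => (x, w));
  C0_prodmap : forall (E1 E2 F1 F2 : topmod K) (U1 : E1 -> Prop) (U2 : E2 -> Prop)
     (f1 : E1 -> F1) (f2 : E2 -> F2),
     inM E1 -> inM E2 -> inM F1 -> inM F2 -> tm_open U1 -> tm_open U2 ->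
     C0 U1 f1 -> C0 U2 f2 ->
     @C0 (prodtop (@ptop E1 E2)) (prodtop (@ptop F1 F2))
       (fun p => U1 p.1 /\ U2 p.2) (fun p => (f1 p.1, f2 p.2));
  C0_diag : forall E : topmod K, inM E ->
     @C0 E (prodtop (@ptop E E)) (fun _ => True) (fun x => (x, x));
  C0_swap : forall E1 E2, inM E1 -> inM E2 ->
     @C0 (prodtop (@ptop E1 E2)) (prodtop (@ptop E2 E1)) (fun _ => True)
       (fun p => (p.2, p.1));
  C0_assoc : forall E1 E2 E3, inM E1 -> inM E2 -> inM E3 ->
     @C0 (prodtop (@ptop (prodtop (@ptop E1 E2)) E3)) (prodtop (@ptop E1 (prodtop (@ptop E2 E3))))
       (fun _ => True) (fun p => (p.1.1, (p.1.2, p.2)));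
  C0_assocV : forall E1 E2 E3, inM E1 -> inM E2 -> inM E3 ->
     @C0 (prodtop (@ptop E1 (prodtop (@ptop E2 E3)))) (prodtop (@ptop (prodtop (@ptop E1 E2)) E3))
       (fun _ => True) (fun p => ((p.1, p.2.1), p.2.2));
  C0_add : forall E : topmod K, inM E ->
     @C0 (prodtop (@ptop E E)) E (fun _ => True) (fun p => p.1 + p.2);
  C0_scale : forall E : topmod K, inM E ->
     @C0 (prodtop (@ptop (Ktop TK) E)) E (fun _ => True) (fun p => (p.1 : K) *: p.2);
  C0_det : forall (F : topmod K) (U : K^o -> Prop) (f g : K^o -> F), inM F ->
     TK U -> @C0 (Ktop TK) F U f -> @C0 (Ktop TK) F U g ->
     (forall t, U t -> (t : K) \is a GRing.unit -> f t = g t) ->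
     forall t, U t -> f t = g t
}.

Section C1.
Variables (K : comUnitRingType) (TK : (K -> Prop) -> Prop) (C : C0concept TK).

Definition triple (E : topmod K) : topmod K :=
  prodtop (@ptop _ _ C E (prodtop (@ptop _ _ C E (Ktop TK)))).

Definition U1 (E : topmod K) (U : E -> Prop) : triple E -> Prop :=
  fun p => U p.1 /\ U (p.1 + (p.2.2 : K) *: p.2.1).

Definition is_f1 (E F : topmod K) (U : E -> Prop) (f : E -> F) (f1 : triple E -> F) : Prop :=
  C0 C U f /\ @C0 _ _ C (triple E) F (U1 U) f1 /\
  forall p : triple E, U1 U p ->
    f (p.1 + (p.2.2 : K) *: p.2.1) - f p.1 = (p.2.2 : K) *: f1 p.

Definition isC1 (E F : topmod K) (U : E -> Prop) (f : E -> F) : Prop :=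
  exists f1, is_f1 U f f1.

Definition df (E F : topmod K) (f1 : triple E -> F) (x : E) : E -> F :=
  fun v => f1 (x, (v, (0 : K^o))).
End C1.

From HB Require Import structures.
From mathcomp Require Import all_boot all_order all_algebra.
From Stdlib Require Import FunctionalExtensionality PropExtensionality.
Local Open Scope ring_scope.
Import GRing.Theory.

(* Linearity: for a unit t, dividing the telescoping identity
   f(x + t(au + v)) - f(x) = [f(x + tau) - f(x)] + [f(x + tau + tv) - f(x + tau)]
   by t gives f1(x, au + v, t) = a f1(x, u, at) + f1(x + tau, v, t).  Both sides are
   C^0 in t on an open set containing 0, so by (III) they agree at t = 0, which is
   df(x)(au + v) = a df(x)u + df(x)v.  Continuity: df(x) is f1 composed with the
   C^0 map v |-> (x, v, 0). *)

Section C0Calculus.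
Set Implicit Arguments. Unset Strict Implicit.
Variables (K : comUnitRingType) (TK : (K -> Prop) -> Prop) (C : C0concept TK).

Local Notation KT := (Ktop TK).
Local Notation Cprod E1 E2 := (prodtop (@ptop _ _ C E1 E2)).

Lemma open_setT (G : topmod K) : inM C G -> tm_open (fun _ : G => True).
Proof. by move=> /(@M_top _ _ C) [h _]. Qed.

Lemma open_setI (G : topmod K) (A B : G -> Prop) : inM C G ->
  tm_open A -> tm_open B -> tm_open (fun y => A y /\ B y).
Proof. by move=> /(@M_top _ _ C) [_ [_ [_ h]]]; apply: h. Qed.

Lemma open_preimage (G H : topmod K) (g : G -> H) (V : H -> Prop) :
  inM C G -> inM C H -> C0 C (fun _ => True) g -> tm_open V ->
  tm_open (fun y => V (g y)).
Proof.
move=> hG hH hg hV.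
have [W [hW eqW]] := C0_cont hG hH (open_setT hG) hg hV.
suff -> : (fun y => V (g y)) = W by [].
apply: functional_extensionality => y; apply: propositional_extensionality.
by split => /(eqW y I).
Qed.

Lemma C0_restrict (G H : topmod K) (W W' : G -> Prop) (g : G -> H) :
  inM C G -> inM C H -> tm_open W -> tm_open W' ->
  (forall y, W' y -> W y) -> C0 C W g -> C0 C W' g.
Proof.
move=> hG hH hW hW' sub.
exact: (C0_comp (f := fun y => y) hG hG hH hW' hW sub (C0_id_incl hG hW')).
Qed.

Lemma C0_compT (G H L : topmod K) (g : G -> H) (h : H -> L) :
  inM C G -> inM C H -> inM C L ->
  C0 C (fun _ => True) g -> C0 C (fun _ => True) h ->
  C0 C (fun _ => True) (fun y => h (g y)).
Proof.
by move=> hG hH hL; apply: C0_comp (open_setT hG) (open_setT hH) _.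
Qed.

Lemma C0_comp_on (G H L : topmod K) (D : G -> Prop) (V : H -> Prop)
    (g : G -> H) (h : H -> L) :
  inM C G -> inM C H -> inM C L -> tm_open D -> tm_open V ->
  (forall y, D y -> V (g y)) -> C0 C (fun _ => True) g -> C0 C V h ->
  C0 C D (fun y => h (g y)).
Proof.
move=> hG hH hL hD hV sub cg; apply: C0_comp sub _ => //.
exact: C0_restrict (open_setT hG) hD (fun _ _ => I) cg.
Qed.

Lemma C0_pair (G H1 H2 : topmod K) (W : G -> Prop) (g1 : G -> H1) (g2 : G -> H2) :
  inM C G -> inM C H1 -> inM C H2 -> tm_open W -> C0 C W g1 -> C0 C W g2 ->
  @C0 _ _ C G (Cprod H1 H2) W (fun y => (g1 y, g2 y)).
Proof.
move=> hG h1 h2 hW c1 c2.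
have hGG := M_prod hG hG.
have diagW : @C0 _ _ C G (Cprod G G) W (fun y => (y, y)).
  exact: C0_restrict (open_setT hG) hW (fun _ _ => I) (C0_diag hG).
have hWW : tm_open (fun p : Cprod G G => W p.1 /\ W p.2).
  apply: open_setI hGG (open_preimage hGG hG _ hW) (open_preimage hGG hG _ hW).
    exact: C0_fst.
  exact: C0_snd.
by have := C0_comp (f := fun y => (y, y) : Cprod G G) hG hGG (M_prod h1 h2) hW hWW
  (fun y hy => conj hy hy) diagW (C0_prodmap hG hG h1 h2 hW hW c1 c2).
Qed.

Lemma C0_const (G H : topmod K) (c : H) : inM C G -> inM C H ->
  C0 C (fun _ => True) (fun _ : G => c).
Proof.
move=> hG hH.
exact: (C0_compT hG (M_prod hG hH) hH (C0_pairl c hG hH) (C0_snd hG hH)).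
Qed.

Lemma C0_add_on (G H : topmod K) (W : G -> Prop) (g1 g2 : G -> H) :
  inM C G -> inM C H -> tm_open W -> C0 C W g1 -> C0 C W g2 ->
  C0 C W (fun y => g1 y + g2 y).
Proof.
move=> hG hH hW c1 c2; have hHH := M_prod hH hH.
exact: (C0_comp hG hHH hH hW (open_setT hHH) (fun _ _ => I)
          (C0_pair hG hH hH hW c1 c2) (C0_add hH)).
Qed.

Lemma C0_scale_on (G H : topmod K) (W : G -> Prop) (a : K) (g : G -> H) :
  inM C G -> inM C H -> tm_open W -> C0 C W g -> C0 C W (fun y => a *: g y).
Proof.
move=> hG hH hW cg.
have := C0_comp hG hH hH hW (open_setT hH) (fun _ _ => I) cg (C0_affine a 0 hH).
by apply: C0_ext => y _; rewrite addr0.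
Qed.

Lemma C0_translate_scale (E : topmod K) : inM C E ->
  @C0 _ _ C (triple C E) E (fun _ => True) (fun p => p.1 + (p.2.2 : K) *: p.2.1).
Proof.
move=> hE; have hK := M_K C; have hEK := M_prod hE hK.
have hT : inM C (triple C E) := M_prod hE hEK.
have scale_swapped : @C0 _ _ C (Cprod E KT) E (fun _ => True)
    (fun q => (q.2 : K) *: q.1).
  exact: (C0_compT hEK (M_prod hK hE) hE (C0_swap hE hK) (C0_scale hE)).
have hTT : tm_open (fun p : triple C E => True /\ True).
  exact: open_setI (open_setT hT) (open_setT hT).
have hEE := M_prod hE hE.
have := C0_comp hT hEE hE hTT (open_setT hEE) (fun _ _ => I)
  (C0_prodmap hE hEK hE hE (open_setT hE) (open_setT hEK)
     (C0_id_incl hE (open_setT hE)) scale_swapped) (C0_add hE).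
exact: C0_restrict hTT (open_setT hT) (fun _ _ => conj I I).
Qed.

Lemma open_U1 (E : topmod K) (U : E -> Prop) : inM C E -> tm_open U ->
  tm_open (U1 (C := C) U).
Proof.
move=> hE hU; have hEK := M_prod hE (M_K C).
have hT : inM C (triple C E) := M_prod hE hEK.
apply: (open_setI hT (open_preimage hT hE (C0_fst hE hEK) hU)).
exact: open_preimage hT hE (C0_translate_scale hE) hU.
Qed.

Lemma C0_triple (G E : topmod K) (e1 e2 : G -> E) (s : G -> KT) :
  inM C G -> inM C E ->
  C0 C (fun _ => True) e1 -> C0 C (fun _ => True) e2 -> C0 C (fun _ => True) s ->
  @C0 _ _ C G (triple C E) (fun _ => True) (fun y => (e1 y, (e2 y, s y))).
Proof.
move=> hG hE c1 c2 cs; have hK := M_K C.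
apply: C0_pair (M_prod hE hK) (open_setT hG) c1 _ => //.
exact: C0_pair (open_setT hG) c2 cs.
Qed.

Lemma scaler_unit_inj (M : lmodType K) (t : K) (y z : M) :
  t \is a GRing.unit -> t *: y = t *: z -> y = z.
Proof.
move=> ht e.
by rewrite -[y]scale1r -(mulVr ht) -scalerA e scalerA mulVr // scale1r.
Qed.

Section Differential.
Variables (E F : topmod K) (U : E -> Prop) (f : E -> F) (f1 : triple C E -> F).
Hypotheses (hE : inM C E) (hF : inM C F) (hU : tm_open U) (hf1 : is_f1 U f f1).

Lemma f1_linear_unit (x u v : E) (a t : K) :
  t \is a GRing.unit ->
  U1 U ((x, (a *: u + v, t : K^o)) : triple C E) ->
  U1 U ((x, (u, a * t : K^o)) : triple C E) ->
  U1 U ((t *: (a *: u) + x, (v, t : K^o)) : triple C E) ->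
  f1 (x, (a *: u + v, t)) = a *: f1 (x, (u, a * t)) + f1 (t *: (a *: u) + x, (v, t)).
Proof.
case: hf1 => _ [_ quot] ht h0 h1 h2.
apply: (scaler_unit_inj ht).
rewrite scalerDr scalerA (mulrC t a).
move: (quot _ h0) (quot _ h1) (quot _ h2) => /= <- <- <-.
have -> : x + (a * t) *: u = t *: (a *: u) + x by rewrite scalerA mulrC addrC.
have -> : t *: (a *: u) + x + t *: v = x + t *: (a *: u + v).
  by rewrite scalerDr addrA [x + _]addrC.
by rewrite [RHS]addrC addrA subrK.
Qed.

Lemma df_linear (x : E) : U x ->
  forall (a : K) (u v : E), df f1 x (a *: u + v) = a *: df f1 x u + df f1 x v.
Proof.
move=> hx a u v; case: (hf1) => _ [cf1 _].
have hK := M_K C; have hT : inM C (triple C E) := M_prod hE (M_prod hE hK).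
have hU1 := open_U1 hE hU.
have idK : @C0 _ _ C KT KT (fun _ => True) id.
  exact: C0_id_incl hK (open_setT hK).
have cx : @C0 _ _ C KT E (fun _ => True) (fun _ => x) by exact: C0_const.
have mulaK : @C0 _ _ C KT KT (fun _ => True) (fun t => a * t : K^o).
  by apply: C0_ext (C0_affine a 0 hK) => t _; rewrite addr0.
have m0 := C0_triple hK hE cx (C0_const (a *: u + v) hK hE) idK.
have m1 := C0_triple hK hE cx (C0_const u hK hE) mulaK.
have m2 := C0_triple hK hE (C0_line (a *: u) x hE) (C0_const v hK hE) idK.
pose D t := U1 U ((x, (a *: u + v, t)) : triple C E) /\
  U1 U ((x, (u, a * t : K^o)) : triple C E) /\
  U1 U ((t *: (a *: u) + x, (v, t)) : triple C E).
have oD : TK D.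
  apply: (open_setI hK (open_preimage hK hT m0 hU1)).
  exact: open_setI hK (open_preimage hK hT m1 hU1) (open_preimage hK hT m2 hU1).
have c0 := C0_comp_on hK hT hF oD hU1 (fun t ht => ht.1) m0 cf1.
have c1 := C0_comp_on hK hT hF oD hU1 (fun t ht => ht.2.1) m1 cf1.
have c2 := C0_comp_on hK hT hF oD hU1 (fun t ht => ht.2.2) m2 cf1.
have c12 := C0_add_on hK hF oD (C0_scale_on a hK hF oD c1) c2.
have D0 : D 0 by rewrite /D /U1 /= !scale0r !add0r !addr0 !mulr0 scale0r addr0.
have := C0_det hF oD c0 c12 _ D0.
rewrite /df /= mulr0 scale0r add0r => -> //.
by move=> t [h0 [h1 h2]] ht; apply: f1_linear_unit.
Qed.

Lemma df_C0 (x : E) : U x -> C0 C (fun _ : E => True) (df f1 x).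
Proof.
move=> hx; case: hf1 => _ [cf1 _].
have hK := M_K C; have hT : inM C (triple C E) := M_prod hE (M_prod hE hK).
have embed := C0_triple hE hE (C0_const x hE hE) (C0_id_incl hE (open_setT hE))
  (C0_const (H := KT) 0 hE hK).
apply: C0_comp_on (open_setT hE) (open_U1 hE hU) _ embed cf1 => //.
by move=> v _; rewrite /U1 /= scale0r addr0.
Qed.

End Differential.

End C0Calculus.

Theorem proposition2p2 (K : comUnitRingType) (TK : (K -> Prop) -> Prop)
  (C : C0concept TK) (E F : topmod K) (U : E -> Prop) (f : E -> F)
  (f1 : triple C E -> F) (x : E) :
  inM C E -> inM C F -> tm_open U -> is_f1 U f f1 -> U x ->
  (forall (a : K) (u v : E), df f1 x (a *: u + v) = a *: df f1 x u + df f1 x v) /\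
  C0 C (fun _ : E => True) (df f1 x).
Proof.
move=> hE hF hU hf1 hx.
split; [exact: (df_linear hE hF hU hf1 hx) | exact: (df_C0 hE hF hU hf1 hx)].
Qed.
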